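(* Let $\Gamma=(\gamma_{ij})\in(\mathcal{K}_\infty\cup\{0\})^{N\times N}$ be irreducible, $\mu=(\mu_1,\dots,\mu_N)$ with $\mu_i$ monotone aggregation functions, and $\Gamma_\mu$ the induced operator. Let $\kappa_0>0$, $\kappa_\Gamma>\kappa_h>0$, $\delta>0$, let $\phi$ be as in the context, and let $c\in\mathbb{R}^N$ with $c\gg0$ and $\|c\|<\kappa_\Gamma/2$. Let $\tau=\langle y^1,\dots,y^{N+1}\rangle$, $y^j=(v^j,t_j)$, $y^1<\dots<y^{N+1}$, be an $N$-simplex of $\tilde K_1(\delta)$ lying on the boundary of the positive orthant, i.e. $v^j\in\mathbb{R}^N_+$ for all $j$ and there is an index $i^*$ with $v^j_{i^*}=0$ for all $j=1,\dots,N+1$. If $\|v^{N+1}\|<\kappa_0+\kappa_\Gamma$, then $\tau$ is not complete.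
   Context: Order on $\mathbb{R}^N$: $v\ge w$ iff $v_i\ge w_i$ for all $i$; $v>w$ iff $v\ge w$, $v\ne w$; $v\gg w$ iff $v_i>w_i$ for all $i$. $\|\cdot\|$ Euclidean norm, $e=(1,\dots,1)^\top$. $\mathcal{K}_\infty$: continuous, strictly increasing, unbounded $\gamma:\mathbb{R}_+\to\mathbb{R}_+$ with $\gamma(0)=0$; $0$ denotes the zero function. A monotone aggregation function is a continuous $\mu_i:\mathbb{R}^N_+\to\mathbb{R}_+$ with $\mu_i(s)=0$ iff $s=0$, $\mu_i(s)<\mu_i(t)$ whenever $s\ll t$, and $\mu_i(s)\to\infty$ as $\|s\|\to\infty$. The induced operator is $\Gamma_\mu(s)_i=\mu_i(\gamma_{i1}(s_1),\dots,\gamma_{iN}(s_N))$; it is monotone with $\Gamma_\mu(0)=0$. $\Gamma$ is irreducible if the $0$-$1$ matrix $A$ with $a_{ij}=1$ iff $\gamma_{ij}\not\equiv0$ is irreducible (equivalently the directed graph with an edge $j\to i$ iff $\gamma_{ij}\not\equiv 0$ is strongly connected). Given $\kappa_0>0$, $\kappa_\Gamma>\kappa_h>0$, $\phi(v)=\Gamma_\mu(v)\big(1+\min\{0,\frac{\kappa_\Gamma-2\|v\|}{\|v\|+\kappa_0}\}\big)+\max\{0,\kappa_h-2\|v\|\}e$ for $v\in\mathbb{R}^N_+$. Triangulation $\tilde K_1(\delta)$: with $P=\mathrm{diag}(\delta,\dots,\delta,1)$, its $(N+1)$-simplices are $\langle y^1,\dots,y^{N+2}\rangle$ with $y^1=(\delta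 z,0)$, $z\in\mathbb{Z}^N$, $y^{i+1}=y^i+Pe_{\pi(i)}$ for a permutation $\pi$ of $\{1,\dots,N+1\}$; all vertices lie in $\mathbb{R}^N\times\{0,1\}$ and are componentwise increasing. Its $N$-simplices are the facets of these. Homotopy $\vartheta(v,t)=(1-t)c+t\phi(v)$; labeling $l(v,t)=\vartheta(v,t)-v$. Labeling matrix $L(\tau)$: $(N+1)\times(N+1)$ with $j$-th column $(1,l(y^j)^\top)^\top$. $W\succ0$ (lexicographically positive) means the first nonzero entry of each row of $W$ is positive. $\tau$ is complete if $L(\tau)W=I_{N+1}$ has a solution $W\succ0$. *)

From HB Require Import structures.
From mathcomp Require Import all_boot all_order all_algebra all_fingroup.
Set Implicit Arguments. Unset Strict Implicit. Unset Printing Implicit Defensive.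
Import Order.TTheory GRing.Theory Num.Theory.
Local Open Scope ring_scope.

Section Defs.
Variable R : rcfType.

Definition enorm (N : nat) (v : 'rV[R]_N) : R := Num.sqrt (\sum_(i < N) v 0 i ^+ 2).

Definition nonneg_vec (N : nat) (v : 'rV[R]_N) : Prop := forall i, 0 <= v 0 i.

(* class K_infinity, for functions R_+ -> R_+ represented as R -> R *)
Definition Kinf (g : R -> R) : Prop :=
  [/\ (forall x, 0 <= x -> forall e, 0 < e -> exists2 d, 0 < d &
          forall y, 0 <= y -> `|y - x| < d -> `|g y - g x| < e),
      (forall x y, 0 <= x -> x < y -> g x < g y),
      (forall M, exists2 x, 0 <= x & M < g x),
      g 0 = 0 &
      (forall x, 0 <= x -> 0 <= g x)].

Definition Kinf_or_zero (g : R -> R) : Prop :=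
  Kinf g \/ (forall x, 0 <= x -> g x = 0).

Definition mono_aggr (N : nat) (mu : 'rV[R]_N -> R) : Prop :=
  [/\ (forall s : 'rV[R]_N, nonneg_vec s -> forall e, 0 < e -> exists2 d, 0 < d &
          forall t : 'rV[R]_N, nonneg_vec t -> enorm (t - s) < d -> `|mu t - mu s| < e),
      (forall s : 'rV[R]_N, nonneg_vec s -> 0 <= mu s),
      (forall s : 'rV[R]_N, nonneg_vec s -> (mu s = 0 <-> s = 0)),
      (forall s t : 'rV[R]_N, nonneg_vec s -> (forall i, s 0 i < t 0 i) -> mu s < mu t) &
      (forall M, exists K, forall s : 'rV[R]_N, nonneg_vec s -> K < enorm s -> M < mu s)].

Inductive reach (N : nat) (E : 'I_N -> 'I_N -> Prop) : 'I_N -> 'I_N -> Prop :=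
| reach_refl a : reach E a a
| reach_step a b c : E a b -> reach E b c -> reach E a c.

(* Gamma irreducible: the graph with an edge j -> i iff gamma_ij is not
   identically zero (on R_+) is strongly connected *)
Definition Gamma_irreducible (N : nat) (gam : 'I_N -> 'I_N -> R -> R) : Prop :=
  forall a b : 'I_N,
    reach (fun j i => exists2 s, 0 <= s & gam i j s <> 0) a b.

Definition Gamma_mu (N : nat) (gam : 'I_N -> 'I_N -> R -> R)
    (mu : 'I_N -> 'rV[R]_N -> R) (s : 'rV[R]_N) : 'rV[R]_N :=
  \row_i mu i (\row_j gam i j (s 0 j)).

Definition phi (N : nat) (gam : 'I_N -> 'I_N -> R -> R)
    (mu : 'I_N -> 'rV[R]_N -> R) (k0 kG kh : R) (v : 'rV[R]_N) : 'rV[R]_N :=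
  (1 + Num.min 0 ((kG - 2 * enorm v) / (enorm v + k0))) *: Gamma_mu gam mu v
  + Num.max 0 (kh - 2 * enorm v) *: const_mx 1.

Definition theta (N : nat) (gam : 'I_N -> 'I_N -> R -> R)
    (mu : 'I_N -> 'rV[R]_N -> R) (k0 kG kh : R) (c : 'rV[R]_N)
    (y : 'rV[R]_N * R) : 'rV[R]_N :=
  (1 - y.2) *: c + y.2 *: phi gam mu k0 kG kh y.1.

Definition label (N : nat) (gam : 'I_N -> 'I_N -> R -> R)
    (mu : 'I_N -> 'rV[R]_N -> R) (k0 kG kh : R) (c : 'rV[R]_N)
    (y : 'rV[R]_N * R) : 'rV[R]_N :=
  theta gam mu k0 kG kh c y - y.1.

(* vertices of the (N+1)-simplex of K~_1(delta) determined by z and pi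
   (0-indexed: vertex 0 = (delta z, 0),
    vertex (m+1) = vertex m + P e_{pi(m)}; coordinate ord_max is t) *)
Definition K1_vertex (N : nat) (delta : R) (z : 'I_N -> int) (pi : 'S_N.+1)
    (m : 'I_N.+2) : 'rV[R]_N * R :=
  (\row_j (delta * (z j)%:~R +
      \sum_(i < N.+1 | (i < m)%N) (pi i == widen_ord (leqnSn N) j)%:R * delta),
   \sum_(i < N.+1 | (i < m)%N) (pi i == ord_max)%:R).

(* y = (y^1,...,y^{N+1}) (in increasing order) are the vertices of an
   N-simplex of K~_1(delta), i.e. a facet of one of its (N+1)-simplices *)
Definition K1_Nsimplex (N : nat) (delta : R) (y : 'I_N.+1 -> 'rV[R]_N * R) : Prop :=
  exists (z : 'I_N -> int) (pi : 'S_N.+1) (k : 'I_N.+2),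
    forall j : 'I_N.+1, y j = K1_vertex delta z pi (lift k j).

Definition label_matrix (N : nat) (gam : 'I_N -> 'I_N -> R -> R)
    (mu : 'I_N -> 'rV[R]_N -> R) (k0 kG kh : R) (c : 'rV[R]_N)
    (y : 'I_N.+1 -> 'rV[R]_N * R) : 'M[R]_N.+1 :=
  \matrix_(i < N.+1, j < N.+1)
    match unlift ord0 i with
    | Some k => label gam mu k0 kG kh c (y j) 0 k
    | None => 1
    end.

Definition lexpos (n : nat) (W : 'M[R]_n) : Prop :=
  forall i : 'I_n, exists j : 'I_n,
    0 < W i j /\ forall k : 'I_n, (k < j)%N -> W i k = 0.

Definition complete (N : nat) (gam : 'I_N -> 'I_N -> R -> R)
    (mu : 'I_N -> 'rV[R]_N -> R) (k0 kG kh : R) (c : 'rV[R]_N)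
    (y : 'I_N.+1 -> 'rV[R]_N * R) : Prop :=
  exists W : 'M[R]_N.+1, label_matrix gam mu k0 kG kh c y *m W = 1%:M /\ lexpos W.

End Defs.

From HB Require Import structures.
From mathcomp Require Import all_boot all_order all_algebra all_fingroup.
From mathcomp Require Import lra.
Set Implicit Arguments. Unset Strict Implicit. Unset Printing Implicit Defensive.
Import Order.TTheory GRing.Theory Num.Theory.
Local Open Scope ring_scope.

(* Suppose tau is complete, W >lex 0 and L(tau) W = I.  The first
   column lam of W is nonnegative, sums to 1 (first row of L is all ones) and
   annihilates every label coordinate: sum_j lam_j l(y^j)_i = 0.  Call an index
   i "vanishing" if v^j_i = 0 for every vertex j in the support of lam.  For a
   vanishing i the i-th label of a supported vertex is (1-t_j) c_i + t_j phi_i,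
   a sum of nonnegative terms, so their lam-combination can only be zero if
   t_j = 1 and phi_i(v^j) = 0.  Since ||v^j|| <= ||v^{N+1}|| < k0 + kG, the
   scaling factor of Gamma_mu in phi is positive; hence Gamma_mu(v^j)_i = 0,
   so gamma_im(v^j_m) = 0 for all m, and every m with gamma_im a K_inf function
   is vanishing too.  The index i* is vanishing, so by irreducibility every
   index is, i.e. v^j = 0 on the support; but then phi_i(0) >= kh > 0,
   a contradiction. *)

Section SimplexGeometry.
Variable R : rcfType.

Lemma sum_prefix_le (n m m' : nat) (F : 'I_n -> R) :
  (forall i, 0 <= F i) -> (m <= m')%N ->
  \sum_(i < n | (i < m)%N) F i <= \sum_(i < n | (i < m')%N) F i.
Proof.
move=> F_ge0 le_mm'; rewrite [X in X <= _]big_mkcond [X in _ <= X]big_mkcond.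
apply: ler_sum => i _; case: ifP => [lt_im | _]; first by rewrite (leq_trans lt_im).
by case: ifP.
Qed.

(* The time coordinate of a vertex of K~_1(delta) lies in [0, 1]: it counts
   how many of the first m steps of the permutation hit the last axis. *)
Lemma K1_vertex_time_bounds N (delta : R) z pi (m : 'I_N.+2) :
  0 <= (K1_vertex delta z pi m).2 <= 1.
Proof.
apply/andP; split; first by apply: sumr_ge0 => i _; rewrite ler0n.
apply: (@le_trans _ _ (\sum_(i < N.+1 | (i < N.+2)%N) (pi i == ord_max)%:R)).
  by apply: sum_prefix_le => [i|]; [rewrite ler0n | exact: ltnW (ltn_ord m)].
rewrite (eq_bigl xpredT); last by move=> i; rewrite /= ltnS ltnW.
rewrite (reindex_inj (@perm_inj _ pi^-1)) /=.
under eq_bigr do rewrite permKV.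
by rewrite (bigD1 ord_max) //= eqxx big1 ?addr0 // => i /negbTE ->.
Qed.

Lemma K1_vertex_mono N (delta : R) z pi (m m' : 'I_N.+2) (i : 'I_N) :
  0 < delta -> (m <= m')%N ->
  (K1_vertex delta z pi m).1 0 i <= (K1_vertex delta z pi m').1 0 i.
Proof.
move=> delta_gt0 le_mm'; rewrite !mxE lerD2l.
by apply: sum_prefix_le => // k; rewrite mulr_ge0 ?ler0n ?ltW.
Qed.

Lemma enorm_le_nonneg N (a b : 'rV[R]_N) :
  nonneg_vec a -> (forall i, a 0 i <= b 0 i) -> enorm a <= enorm b.
Proof.
move=> a_ge0 le_ab; apply: ler_wsqrtr; apply: ler_sum => i _.
by rewrite lerXn2r ?nnegrE ?(le_trans (a_ge0 i)).
Qed.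

Lemma enorm_coord0 N (a : 'rV[R]_N) : (forall i, a 0 i = 0) -> enorm a = 0.
Proof. by move=> a0; rewrite /enorm big1 ?sqrtr0 // => i _; rewrite a0 expr0n. Qed.

Lemma K1_Nsimplex_time_bounds N (delta : R) (y : 'I_N.+1 -> 'rV[R]_N * R) :
  K1_Nsimplex delta y -> forall j, 0 <= (y j).2 <= 1.
Proof. by move=> [z [pi [k y_def]]] j; rewrite y_def K1_vertex_time_bounds. Qed.

Lemma K1_Nsimplex_norm_le_last N (delta : R) (y : 'I_N.+1 -> 'rV[R]_N * R) :
  0 < delta -> K1_Nsimplex delta y -> (forall j, nonneg_vec (y j).1) ->
  forall j, enorm (y j).1 <= enorm (y ord_max).1.
Proof.
move=> delta_gt0 [z [pi [k y_def]]] y_ge0 j.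
apply: enorm_le_nonneg => // i; rewrite !y_def.
by apply: K1_vertex_mono; rewrite //= leq_bump2 -ltnS.
Qed.

End SimplexGeometry.

(* A nonnegative combination of the nonnegative numbers (1 - t_j) a + t_j b_j
   (a > 0, t_j in [0, 1], b_j >= 0) vanishes only if b_j = 0 wherever the
   coefficient lam_j is nonzero: each such term must have t_j = 1. *)
Lemma convex_comb_eq0 (R : realFieldType) n (lam t b : 'I_n -> R) (a : R) :
  0 < a -> (forall j, 0 <= lam j) -> (forall j, 0 <= t j <= 1) ->
  (forall j, 0 <= b j) ->
  \sum_j ((1 - t j) * a + t j * b j) * lam j = 0 ->
  forall j, lam j != 0 -> b j = 0.
Proof.
move=> a_gt0 lam_ge0 t01 b_ge0 sum0 j lam_neq0.
have term_ge0 k : 0 <= (1 - t k) * a + t k * b k.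
  have /andP[t0 t1] := t01 k.
  by apply: addr_ge0; apply: mulr_ge0; rewrite ?subr_ge0 // ltW.
have /eqP := psumr_eq0P (fun k _ => mulr_ge0 (term_ge0 k) (lam_ge0 k)) sum0 (i := j) isT.
rewrite mulf_eq0 (negbTE lam_neq0) orbF => /eqP term0.
have /andP[t0 t1] := t01 j.
move/eqP: term0; rewrite paddr_eq0 ?mulr_ge0 ?subr_ge0 ?(ltW a_gt0) // => /andP[].
rewrite mulf_eq0 (gt_eqF a_gt0) orbF subr_eq0 => /eqP <-.
by rewrite mul1r => /eqP.
Qed.

Lemma reach_backward (N : nat) (E : 'I_N -> 'I_N -> Prop) (P : 'I_N -> Prop) :
  (forall a b, E a b -> P b -> P a) ->
  forall a b, reach E a b -> P b -> P a.
Proof. by move=> step a b; elim=> // a' b' c' /step + _ IH /IH; apply. Qed.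

Section Completeness.
Variables (R : rcfType) (N : nat) (gam : 'I_N -> 'I_N -> R -> R)
  (mu : 'I_N -> 'rV[R]_N -> R) (k0 kG kh : R) (c : 'rV[R]_N)
  (y : 'I_N.+1 -> 'rV[R]_N * R) (W : 'M[R]_N.+1).

Lemma lexpos_first_col_ge0 : lexpos W -> forall j, 0 <= W j 0.
Proof.
move=> W_lex j; have [l [W_jl W_before]] := W_lex j.
have [l0 | l_gt0] := posnP (val l).
  by rewrite (_ : 0 = l) ?ltW //; apply: val_inj.
by rewrite W_before ?l_gt0.
Qed.

Hypothesis LW : label_matrix gam mu k0 kG kh c y *m W = 1%:M.

(* Reading the first column of L W = I: the first column of W is a vector of
   barycentric weights annihilating every label coordinate. *)
Lemma complete_weights_sum1 : \sum_j W j 0 = 1.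
Proof.
have := congr1 (fun M : 'M[R]_N.+1 => M 0 0) LW; rewrite !mxE /= => LW00.
rewrite -[RHS]LW00.
by apply: eq_bigr => j _; rewrite mxE unlift_none mul1r.
Qed.

Lemma complete_label_comb0 (i : 'I_N) :
  \sum_j label gam mu k0 kG kh c (y j) 0 i * W j 0 = 0.
Proof.
have := congr1 (fun M : 'M[R]_N.+1 => M (lift ord0 i) 0) LW; rewrite !mxE /= => LWi0.
rewrite -[RHS]LWi0.
by apply: eq_bigr => j _; rewrite [in RHS]mxE liftK.
Qed.

Lemma complete_weights_support : exists j, W j 0 != 0.
Proof.
have [j nz | all0] := pickP (fun j => W j 0 != 0); first by exists j.
move: complete_weights_sum1; rewrite big1 => [/eqP | j _]; first by rewrite eq_sym oner_eq0.
by apply/eqP; rewrite -[_ == _]negbK all0.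
Qed.

End Completeness.

Lemma Kinf_or_zero_ge0 (R : rcfType) (g : R -> R) :
  Kinf_or_zero g -> forall x, 0 <= x -> 0 <= g x.
Proof. by case=> [[_ _ _ _ g_ge0] | g0] x x_ge0; rewrite ?g0 ?g_ge0. Qed.

Lemma Kinf_or_zero_eq0 (R : rcfType) (g : R -> R) (x : R) :
  Kinf_or_zero g -> (exists2 s, 0 <= s & g s <> 0) ->
  0 <= x -> g x = 0 -> x = 0.
Proof.
case=> [[_ g_incr _ g00 _] | g0] g_nonzero; last by case: g_nonzero => s /g0.
rewrite le_eqVlt => /orP[/eqP <- // | x_gt0] gx0.
by have := g_incr 0 x (lexx 0) x_gt0; rewrite g00 gx0 ltxx.
Qed.

Section PhiPositivity.
Variables (R : rcfType) (N : nat) (gam : 'I_N -> 'I_N -> R -> R)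
  (mu : 'I_N -> 'rV[R]_N -> R) (k0 kG kh : R).
Hypothesis gam_class : forall i j, Kinf_or_zero (gam i j).
Hypothesis mu_aggr : forall i, mono_aggr (mu i).

Lemma Gamma_mu_ge0 (v : 'rV[R]_N) : nonneg_vec v -> nonneg_vec (Gamma_mu gam mu v).
Proof.
move=> v_ge0 i; rewrite mxE; have [_ mu_ge0 _ _ _] := mu_aggr i.
by apply: mu_ge0 => m; rewrite mxE; apply: Kinf_or_zero_ge0.
Qed.

(* If Gamma_mu(v)_i = 0 then every gamma_im(v_m) vanishes (mu_i is positive
   definite), hence v_m = 0 along every edge m -> i of the graph of Gamma. *)
Lemma Gamma_mu_coord_eq0 (v : 'rV[R]_N) (i m : 'I_N) :
  nonneg_vec v -> Gamma_mu gam mu v 0 i = 0 ->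
  (exists2 s, 0 <= s & gam i m s <> 0) -> v 0 m = 0.
Proof.
move=> v_ge0; rewrite mxE; have [_ _ mu_def _ _] := mu_aggr i.
move=> /mu_def row0 edge; apply: (Kinf_or_zero_eq0 (gam_class i m) edge) => //.
have /(congr1 (fun r : 'rV[R]_N => r 0 m)) : \row_j gam i j (v 0 j) = 0.
  by apply: row0 => j; rewrite mxE; apply: Kinf_or_zero_ge0.
by rewrite !mxE.
Qed.

Definition phi_scale (n : R) : R := 1 + Num.min 0 ((kG - 2 * n) / (n + k0)).

Lemma phi_coordE (v : 'rV[R]_N) (i : 'I_N) :
  phi gam mu k0 kG kh v 0 i =
  phi_scale (enorm v) * Gamma_mu gam mu v 0 i + Num.max 0 (kh - 2 * enorm v).
Proof. by rewrite /phi !mxE mulr1. Qed.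

Lemma phi_scale_gt0 (n : R) : 0 < k0 -> 0 <= n -> n < k0 + kG -> 0 < phi_scale n.
Proof.
move=> k0_gt0 n_ge0 n_small.
rewrite /phi_scale -ltrBlDr sub0r ltrNl lt_min ltrN10 /= ltr_pdivlMr; lra.
Qed.

Lemma phi_ge0 (v : 'rV[R]_N) : 0 < k0 -> nonneg_vec v -> enorm v < k0 + kG ->
  nonneg_vec (phi gam mu k0 kG kh v).
Proof.
move=> k0_gt0 v_ge0 v_short i; rewrite phi_coordE addr_ge0 ?le_max ?lexx //.
by rewrite mulr_ge0 ?Gamma_mu_ge0 // ltW // phi_scale_gt0 ?sqrtr_ge0.
Qed.

Lemma phi_coord_eq0 (v : 'rV[R]_N) (i : 'I_N) :
  0 < k0 -> nonneg_vec v -> enorm v < k0 + kG ->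
  phi gam mu k0 kG kh v 0 i = 0 -> Gamma_mu gam mu v 0 i = 0 /\ kh <= 2 * enorm v.
Proof.
move=> k0_gt0 v_ge0 v_short; rewrite phi_coordE => /eqP.
have scale_gt0 := phi_scale_gt0 k0_gt0 (sqrtr_ge0 _) v_short.
have scaled_ge0 : 0 <= phi_scale (enorm v) * Gamma_mu gam mu v 0 i.
  by rewrite mulr_ge0 ?Gamma_mu_ge0 ?ltW.
rewrite (paddr_eq0 scaled_ge0) ?le_max ?lexx // mulf_eq0 (gt_eqF scale_gt0) /=.
move=> /andP[/eqP Gi0 /eqP max0]; split=> //.
by rewrite -subr_le0 -[X in _ <= X]max0 le_max lexx orbT.
Qed.

End PhiPositivity.

Lemma label_coord_on_face (R : rcfType) N gam mu (k0 kG kh : R) (c : 'rV[R]_N)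
    (y : 'rV[R]_N * R) (i : 'I_N) :
  y.1 0 i = 0 ->
  label gam mu k0 kG kh c y 0 i = (1 - y.2) * c 0 i + y.2 * phi gam mu k0 kG kh y.1 0 i.
Proof. by move=> yi0; rewrite /label /theta !mxE yi0 subr0. Qed.

Theorem mainTheorem4 (R : rcfType) (N : nat)
    (gam : 'I_N -> 'I_N -> R -> R) (mu : 'I_N -> 'rV[R]_N -> R)
    (k0 kG kh delta : R) (c : 'rV[R]_N) (y : 'I_N.+1 -> 'rV[R]_N * R) :
  (forall i j, Kinf_or_zero (gam i j)) ->
  Gamma_irreducible gam ->
  (forall i, mono_aggr (mu i)) ->
  0 < k0 -> 0 < kh -> kh < kG -> 0 < delta ->
  (forall i, 0 < c 0 i) -> enorm c < kG / 2 ->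
  K1_Nsimplex delta y ->
  (forall j, nonneg_vec (y j).1) ->
  (exists istar : 'I_N, forall j, (y j).1 0 istar = 0) ->
  enorm (y ord_max).1 < k0 + kG ->
  ~ complete gam mu k0 kG kh c y.
Proof.
move=> gam_class irr mu_aggr k0_gt0 kh_gt0 _ delta_gt0 c_gt0 _ simplex y_ge0
  [istar on_face] last_short [W [LW W_lex]].
pose vanishing i := forall j, W j 0 != 0 -> (y j).1 0 i = 0.
have short j : enorm (y j).1 < k0 + kG.
  exact: le_lt_trans (K1_Nsimplex_norm_le_last delta_gt0 simplex y_ge0 j) last_short.
have phi_zero i : vanishing i -> forall j, W j 0 != 0 -> phi gam mu k0 kG kh (y j).1 0 i = 0.
  move=> van_i; apply: (convex_comb_eq0 (c_gt0 i) (lexpos_first_col_ge0 W_lex)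
    (K1_Nsimplex_time_bounds simplex)) => [j|].
    exact: (phi_ge0 kh gam_class mu_aggr k0_gt0 (y_ge0 j) (short j)).
  rewrite -[RHS](complete_label_comb0 LW i); apply: eq_bigr => j _.
  have [-> | nz] := eqVneq (W j 0) 0; first by rewrite !mulr0.
  by rewrite label_coord_on_face ?van_i.
have all_vanish i : vanishing i.
  apply: (reach_backward _ (irr i istar)) => [a b edge van_b j nz | j _]; last exact: on_face.
  have [Gb0 _] := phi_coord_eq0 gam_class mu_aggr k0_gt0 (y_ge0 j) (short j) (phi_zero b van_b j nz).
  exact: (Gamma_mu_coord_eq0 gam_class mu_aggr (y_ge0 j) Gb0 edge).
have [j nz] := complete_weights_support LW.
have [_] := phi_coord_eq0 gam_class mu_aggr k0_gt0 (y_ge0 j) (short j)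
  (phi_zero istar (fun j _ => on_face j) j nz).
by rewrite enorm_coord0 => [|i]; [lra | exact: all_vanish].
Qed.
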